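(* Let $\mathcal{R}$ be a right amenable cell space with finite stabiliser $G_0$, let $(\mathcal{R},Q,N,\delta)$ be a semi-cellular automaton with $Q$ finite and nonempty and $N$ finite, whose global transition function is $\Delta$, and let $\mathcal{F}=(F_i)_{i\in I}$ be a right Følner net in $\mathcal{R}$. If $\mathrm{h}_{\mathcal{F}}(\Delta(Q^M))<\log|Q|$, then $\Delta$ is not pre-injective.
   Context: A cell space $\mathcal{R}$ consists of a group $G$ acting transitively on the left on a nonempty set $M$ via $\triangleright$, a point $m_0\in M$ and a family $(g_{m_0,m})_{m\in M}$ in $G$ with $g_{m_0,m}\triangleright m_0=m$. $G_0$ is the stabiliser of $m_0$, $G/G_0$ the set of left cosets, with $G$ acting by $g\cdot hG_0=ghG_0$. The right semi-action $\triangleleft\colon M\times G/G_0\to M$ is $m\triangleleft gG_0=g_{m_0,m}g\triangleright m_0$. $\mathcal{R}$ is right amenable if there is a finitely additive probability measure $\mu$ on the power set of $M$ such that $\mu(\{a\triangleleft\mathfrak{g}:a\in A\})=\mu(A)$ whenever $\mathfrak{g}\in G/G_0$, $A\subseteq M$ and $m\mapsto m\triangleleft\mathfrak{g}$ is injective on $A$. A right Følner net in $\mathcal{R}$ is a net $(F_i)_{i\in I}$ (over a directed set) of nonempty finite subsets of $M$ with $\lim_{i}\frac{|F_i\setminus\{m: m\triangleleft\mathfrak{g}\in F_i\}|}{|F_i|}=0$ for every $\mathfrak{g}\in G/G_0$. A semi-cellular automaton is $(\mathcal{R},Q,N,\delta)$ with $Q$ a set, $N\subseteq G/G_0$ with $G_0\cdot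 N\subseteq N$, $\delta\colon Q^N\to Q$; its global transition function is $\Delta(c)(m)=\delta(n\mapsto c(m\triangleleft n))$. For $A\subseteq M$, $\pi_A\colon Q^M\to Q^A$ is restriction; $\mathrm{h}_{\mathcal{F}}(X)=\limsup_{i\in I}\frac{\log|\pi_{F_i}(X)|}{|F_i|}$ for $X\subseteq Q^M$. $\Delta$ is pre-injective if for all $c,c'\in Q^M$ such that $\{m: c(m)\neq c'(m)\}$ is finite and $\Delta(c)=\Delta(c')$ we have $c=c'$. *)

From Stdlib Require Import Reals List Classical ClassicalEpsilon.
From Coquelicot Require Import Coquelicot.
Set Implicit Arguments.
Open Scope R_scope.

Record group := Group {
  gcar :> Type;
  gmul : gcar -> gcar -> gcar;
  gone : gcar;
  ginv : gcar -> gcar;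
  gmulA : forall x y z, gmul x (gmul y z) = gmul (gmul x y) z;
  gmul1g : forall x, gmul gone x = x;
  gmulVg : forall x, gmul (ginv x) x = gone
}.

Record cell_space := CellSpace {
  cs_G : group;
  cs_M : Type;
  cs_act : cs_G -> cs_M -> cs_M;
  cs_act1 : forall m, cs_act (gone cs_G) m = m;
  cs_actM : forall g h m, cs_act (gmul cs_G g h) m = cs_act g (cs_act h m);
  cs_transitive : forall m m', exists g, cs_act g m = m';
  cs_m0 : cs_M;
  cs_gfam : cs_M -> cs_G;
  cs_gfamP : forall m, cs_act (cs_gfam m) cs_m0 = m
}.

Section CellSpaceDefs.
Variable CS : cell_space.
Local Notation G := (cs_G CS).
Local Notation M := (cs_M CS).
Local Notation act := (cs_act CS).
Local Notation m0 := (cs_m0 CS).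

Definition stab (g : G) : Prop := act g m0 = m0.

Definition is_coset (S : G -> Prop) : Prop :=
  exists g, forall h, S h <-> exists k, stab k /\ h = gmul G g k.
Definition coset := { S : G -> Prop | is_coset S }.

Lemma coset_of_proof (g : G) :
  is_coset (fun h => exists k, stab k /\ h = gmul G g k).
Proof. exists g; intro h; tauto. Qed.

Definition coset_of (g : G) : coset := exist _ _ (coset_of_proof g).

Definition coset_rep (c : coset) : G :=
  proj1_sig (constructive_indefinite_description _ (proj2_sig c)).

Definition coset_lmul (g : G) (c : coset) : coset := coset_of (gmul G g (coset_rep c)).

(* right semi-action  m <| gG_0 = g_{m0,m} g |> m0 *)
Definition rsemi (m : M) (c : coset) : M := act (gmul G (cs_gfam CS m) (coset_rep c)) m0.

Definition finite_stabiliser : Prop := exists l : list G, forall g, stab g -> In g l.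

Definition right_amenable : Prop :=
  exists mu : (M -> Prop) -> R,
    (forall A, 0 <= mu A) /\
    mu (fun _ => True) = 1 /\
    (forall A B, (forall m, A m -> B m -> False) ->
        mu (fun m => A m \/ B m) = mu A + mu B) /\
    (forall (c : coset) (A : M -> Prop),
        (forall a a', A a -> A a' -> rsemi a c = rsemi a' c -> a = a') ->
        mu (fun m => exists a, A a /\ m = rsemi a c) = mu A).
End CellSpaceDefs.

Definition has_card {X : Type} (S : X -> Prop) (n : nat) : Prop :=
  exists l : list X, NoDup l /\ (forall x, In x l <-> S x) /\ length l = n.

Definition finite_set {X : Type} (S : X -> Prop) : Prop := exists n, has_card S n.

(* cardinality of a finite set (0 for infinite sets; only used on finite ones) *)
Definition fcard {X : Type} (S : X -> Prop) : nat :=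
  match excluded_middle_informative (finite_set S) with
  | left H => proj1_sig (constructive_indefinite_description _ H)
  | right _ => 0%nat
  end.

Record directed_set := DirectedSet {
  ds_I :> Type;
  ds_le : ds_I -> ds_I -> Prop;
  ds_refl : forall i, ds_le i i;
  ds_trans : forall i j k, ds_le i j -> ds_le j k -> ds_le i k;
  ds_inhabited : inhabited ds_I;
  ds_directed : forall i j, exists k, ds_le i k /\ ds_le j k
}.

Definition net_tends_to {I : directed_set} (x : I -> R) (l : R) : Prop :=
  forall eps, 0 < eps -> exists i0, forall i, ds_le I i0 i -> Rabs (x i - l) < eps.

Definition net_limsup {I : directed_set} (x : I -> R) : Rbar :=
  Rbar_glb (fun y => exists i0, y = Lub_Rbar (fun r => exists i, ds_le I i0 i /\ r = x i)).

Definition right_folner_net (CS : cell_space) (I : directed_set)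
    (F : I -> cs_M CS -> Prop) : Prop :=
  (forall i, finite_set (F i) /\ exists m, F i m) /\
  forall c : coset CS,
    net_tends_to
      (fun i => INR (fcard (fun m => F i m /\ ~ F i (rsemi m c))) / INR (fcard (F i))) 0.

Definition restrict {M Q : Type} (A : M -> Prop) (c : M -> Q) : {m | A m} -> Q :=
  fun x => c (proj1_sig x).

Definition proj_set {M Q : Type} (A : M -> Prop) (X : (M -> Q) -> Prop)
  : ({m | A m} -> Q) -> Prop :=
  fun p => exists c, X c /\ p = restrict A c.

Definition entropy {M Q : Type} {I : directed_set} (F : I -> M -> Prop)
    (X : (M -> Q) -> Prop) : Rbar :=
  net_limsup (fun i => ln (INR (fcard (proj_set (F i) X))) / INR (fcard (F i))).

Definition nbhd_ok (CS : cell_space) (N : coset CS -> Prop) : Prop :=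
  forall k n, stab CS k -> N n -> N (coset_lmul k n).

Definition global_transition (CS : cell_space) (Q : Type) (N : coset CS -> Prop)
    (delta : ({n | N n} -> Q) -> Q) (c : cs_M CS -> Q) : cs_M CS -> Q :=
  fun m => delta (fun n => c (rsemi m (proj1_sig n))).

Definition pre_injective {M Q : Type} (Delta : (M -> Q) -> (M -> Q)) : Prop :=
  forall c c' : M -> Q, finite_set (fun m => c m <> c' m) ->
    Delta c = Delta c' -> c = c'.

From Stdlib Require Import Reals List Permutation Classical ClassicalEpsilon ProofIrrelevance.
From Stdlib Require Import FunctionalExtensionality Lia Lra.
From Coquelicot Require Import Coquelicot.
Open Scope R_scope.

(* If Delta is pre-injective, distinct patterns on a finite set F of cells, extended by a
   fixed state outside F, have distinct images; these images differ only on F and on its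
   outer boundary D, so q^|F| <= |pi_F(Delta(Q^M))| * q^|D|.  Since G_0 and N are finite,
   every cell of D is m <| c for some m in F with m <| c outside F, c ranging over a fixed
   finite set of cosets, so the Folner condition makes |D|/|F_i| tend to 0 and the entropy
   is at least log q.  Neither right amenability nor G_0 . N included in N is needed. *)

Section FiniteSets.
Context {X : Type}.

Lemma fcard_has_card {S : X -> Prop} {n} : has_card S n -> fcard S = n.
Proof.
  intro Hc. unfold fcard. destruct excluded_middle_informative as [Hf|Hf].
  - destruct constructive_indefinite_description as [m [l [Hn [Hi Hl]]]]; simpl.
    destruct Hc as [l' [Hn' [Hi' Hl']]]. subst.
    apply Permutation_length, NoDup_Permutation; auto.
    intro x; rewrite Hi, Hi'; tauto.
  - exfalso; apply Hf; exists n; exact Hc.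
Qed.

Lemma fcard_list (S : X -> Prop) {l} : NoDup l -> (forall x, In x l <-> S x) ->
  finite_set S /\ fcard S = length l.
Proof.
  intros Hn Hi. assert (Hc : has_card S (length l)) by (exists l; auto).
  split; [exists (length l); exact Hc|exact (fcard_has_card Hc)].
Qed.

Definition fenum (S : X -> Prop) : list X :=
  match excluded_middle_informative (exists l, NoDup l /\ forall x, In x l <-> S x) with
  | left H => proj1_sig (constructive_indefinite_description _ H)
  | right _ => nil
  end.

Lemma fenum_spec {S : X -> Prop} : finite_set S ->
  NoDup (fenum S) /\ (forall x, In x (fenum S) <-> S x) /\ length (fenum S) = fcard S.
Proof.
  intros [n [l [Hn [Hi _]]]]. unfold fenum. destruct excluded_middle_informative as [H|H].
  - destruct constructive_indefinite_description as [l' [Hn' Hi']]; simpl.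
    split; [exact Hn'|split; [exact Hi'|]].
    symmetry; apply (fcard_list S Hn' Hi').
  - exfalso; apply H; eauto.
Qed.

Lemma fcard_pos {S : X -> Prop} {x} : finite_set S -> S x -> (0 < fcard S)%nat.
Proof.
  intros Hf Hx. destruct (fenum_spec Hf) as [_ [Hi Hl]]. rewrite <- Hl.
  apply Hi in Hx. destruct (fenum S); [destruct Hx|simpl; lia].
Qed.

Lemma finite_set_incl (S : X -> Prop) {T : X -> Prop} : finite_set T -> (forall x, S x -> T x) ->
  finite_set S.
Proof.
  intros [n [l [Hn [Hi _]]]] Hs.
  set (b x := if excluded_middle_informative (S x) then true else false).
  exists (length (filter b l)), (filter b l).
  split; [apply NoDup_filter; exact Hn|split; [|reflexivity]].
  intro x; rewrite filter_In, Hi; unfold b.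
  destruct excluded_middle_informative as [Hx|Hx]; split.
  - intros _; exact Hx.
  - intros _; split; [apply Hs, Hx|reflexivity].
  - intros [_ E]; discriminate E.
  - intro H; contradiction.
Qed.

Lemma rel_injection_list {Y : Type} (l : list Y) : forall (S : X -> Prop) (Rl : X -> Y -> Prop),
  (forall x, S x -> exists y, In y l /\ Rl x y) ->
  (forall x x' y, S x -> S x' -> Rl x y -> Rl x' y -> x = x') ->
  exists lS, NoDup lS /\ (forall x, In x lS <-> S x) /\ (length lS <= length l)%nat.
Proof.
  induction l as [|y l IH]; intros S Rl Hex Hinj.
  - exists nil; split; [constructor|split; [|simpl; lia]].
    intro x; split; [intros []|intro Hx; destruct (Hex x Hx) as [y [[] _]]].
  - destruct (classic (exists x0, S x0 /\ Rl x0 y)) as [[x0 [Hx0 Rx0]]|Hno].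
    + destruct (IH (fun x => S x /\ x <> x0) Rl) as [lS [Hnd [Hin Hlen]]].
      * intros x [Hx Hne]. destruct (Hex x Hx) as [y' [[<-|Hy'] Ry']]; eauto.
        exfalso; apply Hne; eapply Hinj; eauto.
      * intros x x' y'' [Hx1 _] [Hx2 _]; apply Hinj; assumption.
      * exists (x0 :: lS); split; [constructor; [rewrite Hin; tauto|exact Hnd]|split].
        -- intro x; simpl; rewrite Hin; split.
           ++ intros [<-|[]]; auto.
           ++ intro Hx; destruct (classic (x = x0)); auto.
        -- simpl; lia.
    + destruct (IH S Rl) as [lS [Hnd [Hin Hlen]]]; auto.
      * intros x Hx. destruct (Hex x Hx) as [y' [[<-|Hy'] Ry']]; eauto.
        exfalso; apply Hno; eauto.
      * exists lS; split; [exact Hnd|split; [exact Hin|simpl; lia]].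
Qed.

Lemma fcard_le_rel {Y : Type} (l : list Y) (S : X -> Prop) (Rl : X -> Y -> Prop) :
  (forall x, S x -> exists y, In y l /\ Rl x y) ->
  (forall x x' y, S x -> S x' -> Rl x y -> Rl x' y -> x = x') ->
  finite_set S /\ (fcard S <= length l)%nat.
Proof.
  intros Hex Hinj. destruct (rel_injection_list l S Rl Hex Hinj) as [lS [Hn [Hi Hl]]].
  destruct (fcard_list S Hn Hi) as [Hf Hc]. rewrite Hc; auto.
Qed.

End FiniteSets.

Section Words.
Context {Q : Type}.

Fixpoint words (lQ : list Q) (k : nat) : list (list Q) :=
  match k with
  | O => nil :: nil
  | S k => flat_map (fun a => map (cons a) (words lQ k)) lQ
  end.

Lemma words_In lQ (HQ : forall a, In a lQ) k w : In w (words lQ k) <-> length w = k.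
Proof.
  revert w; induction k as [|k IH]; intro w; simpl.
  - split; [intros [<-|[]]; reflexivity|destruct w; [left; reflexivity|discriminate]].
  - rewrite in_flat_map. split.
    + intros [a [_ Ha]]. apply in_map_iff in Ha. destruct Ha as [w' [<- Hw]].
      apply IH in Hw. simpl; lia.
    + intro H; destruct w as [|a w]; [discriminate|]. exists a; split; auto.
      apply in_map, IH. simpl in H; lia.
Qed.

Lemma words_length lQ k : length (words lQ k) = (length lQ ^ k)%nat.
Proof.
  induction k as [|k IH]; simpl; auto.
  rewrite <- IH. generalize (words lQ k) as W; intro W. clear IH.
  induction lQ as [|a l IHl]; simpl; [reflexivity|rewrite length_app, length_map, IHl; lia].
Qed.

Lemma NoDup_flat_map_cons (W : list (list Q)) (l : list Q) :
  NoDup W -> NoDup l -> NoDup (flat_map (fun a => map (cons a) W) l).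
Proof.
  intro HW. induction 1 as [|a l Ha Hl IH]; simpl; [constructor|].
  apply NoDup_app; auto.
  - apply NoDup_map_NoDup_ForallPairs; auto. intros x y _ _ H; injection H; auto.
  - intros w Hw Hw'. apply in_map_iff in Hw. destruct Hw as [w0 [<- _]].
    apply in_flat_map in Hw'. destruct Hw' as [b [Hb Hw']]. apply in_map_iff in Hw'.
    destruct Hw' as [w1 [E _]]. injection E; intros; subst; auto.
Qed.

Lemma words_NoDup lQ k : NoDup lQ -> NoDup (words lQ k).
Proof.
  intro HQ. induction k as [|k IH]; simpl; [repeat constructor; intros []|].
  apply NoDup_flat_map_cons; auto.
Qed.

End Words.

Fixpoint lookup {M Q : Type} (q0 : Q) (l : list M) (w : list Q) (m : M) : Q :=
  match l, w with
  | a :: l', b :: w' => if excluded_middle_informative (a = m) then b else lookup q0 l' w' m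
  | _, _ => q0
  end.

Lemma lookup_notin {M Q : Type} (q0 : Q) l w (m : M) : ~ In m l -> lookup q0 l w m = q0.
Proof.
  revert w; induction l as [|a l IH]; intros w H; simpl; auto.
  destruct w; auto. destruct excluded_middle_informative; [exfalso; apply H; simpl; auto|].
  apply IH; intro; apply H; simpl; auto.
Qed.

Lemma map_lookup {M Q : Type} (q0 : Q) (l : list M) : NoDup l -> forall w,
  length w = length l -> map (lookup q0 l w) l = w.
Proof.
  induction 1 as [|a l Ha Hl IH]; intros w Hw; simpl.
  - destruct w; simpl in *; auto; discriminate.
  - destruct w as [|b w]; [discriminate|]. simpl in Hw.
    destruct excluded_middle_informative as [_|C]; [|tauto]. f_equal.
    transitivity (map (lookup q0 l w) l); [|apply IH; lia]. apply map_ext_in. intros x Hx.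
    destruct excluded_middle_informative; auto. subst; tauto.
Qed.

Definition sig_enum {X : Type} (S : X -> Prop) : list {m | S m} :=
  flat_map (fun m => match excluded_middle_informative (S m) with
                     | left H => exist _ m H :: nil | right _ => nil end) (fenum S).

Lemma sig_enum_spec {X : Type} {S : X -> Prop} : finite_set S ->
  (forall x, In x (sig_enum S)) /\ length (sig_enum S) = fcard S.
Proof.
  intro Hf. destruct (fenum_spec Hf) as [_ [Hi Hl]]. unfold sig_enum. split.
  - intros [m Hm]. apply in_flat_map. exists m; split; [apply Hi; auto|].
    destruct excluded_middle_informative as [H|H]; [|tauto].
    left; f_equal; apply proof_irrelevance.
  - rewrite <- Hl. assert (Hall : forall x, In x (fenum S) -> S x) by (intro; apply Hi).
    clear Hi Hl. induction (fenum S) as [|a l IH]; simpl; auto.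
    destruct excluded_middle_informative as [H|H]; simpl.
    + f_equal; apply IH; intros; apply Hall; simpl; auto.
    + exfalso; apply H, Hall; simpl; auto.
Qed.

Lemma fcard_patterns_le {M Q : Type} (lQ : list Q) (HQ : forall a, In a lQ)
  {A : M -> Prop} (HA : finite_set A) (P : ({m | A m} -> Q) -> Prop) :
  finite_set P /\ (fcard P <= length lQ ^ fcard A)%nat.
Proof.
  destruct (sig_enum_spec HA) as [Hin Hlen].
  rewrite <- (words_length lQ (fcard A)).
  apply (fcard_le_rel _ P (fun p w => w = map p (sig_enum A))).
  - intros p _. eexists; split; [|reflexivity]. apply words_In; auto.
    rewrite length_map; auto.
  - intros p p' w _ _ -> E. apply functional_extensionality; intro x.
    generalize (Hin x). clear Hin Hlen. induction (sig_enum A); [intros []|].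
    simpl in E; injection E; intros; destruct H1 as [<-|]; auto.
Qed.

Section Groups.
Variable G : group.

Lemma mulgV (x : G) : gmul G x (ginv G x) = gone G.
Proof.
  set (y := gmul G x (ginv G x)).
  rewrite <- (gmul1g G y), <- (gmulVg G y) at 1.
  rewrite <- gmulA. unfold y at 2 3.
  rewrite <- (gmulA G x (ginv G x)), (gmulA G (ginv G x) x), gmulVg, gmul1g.
  apply gmulVg.
Qed.

Lemma mulg1 (x : G) : gmul G x (gone G) = x.
Proof. rewrite <- (gmulVg G x), gmulA, mulgV, gmul1g; auto. Qed.

Lemma mulKVg (x y : G) : gmul G x (gmul G (ginv G x) y) = y.
Proof. rewrite gmulA, mulgV, gmul1g; auto. Qed.

End Groups.

Section CellSpace.
Variable CS : cell_space.
Local Notation G := (cs_G CS).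
Local Notation M := (cs_M CS).
Local Notation act := (cs_act CS).
Local Notation m0 := (cs_m0 CS).

Definition exit_set (F0 : M -> Prop) (c : coset CS) : M -> Prop :=
  fun m => F0 m /\ ~ F0 (rsemi m c).

Lemma coset_rep_coset_of (x : G) :
  exists k, stab CS k /\ coset_rep (coset_of CS x) = gmul G x k.
Proof.
  unfold coset_rep. destruct constructive_indefinite_description as [r Hr]; simpl in *.
  destruct (proj2 (Hr r)) as [k [Hk E]].
  - exists (gone G); split; [apply cs_act1|]. symmetry; apply mulg1.
  - eauto.
Qed.

Lemma act_mul_stab g k : stab CS k -> act (gmul G g k) m0 = act g m0.
Proof. intro H; rewrite cs_actM, H; auto. Qed.

(* [k] measures how far [<|] is from an action: g_{m0, m <| n} = g_{m0, m} (coset_rep n) k. *)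
Lemma rsemi_cancel (m : M) (n : coset CS) : exists k, stab CS k /\
  rsemi (rsemi m n) (coset_of CS (gmul G (ginv G k) (ginv G (coset_rep n)))) = m.
Proof.
  set (g := coset_rep n). set (h := cs_gfam CS m).
  set (h' := cs_gfam CS (rsemi m n)).
  set (k := gmul G (ginv G (gmul G h g)) h').
  assert (Hk : stab CS k).
  { unfold stab, k. rewrite cs_actM. unfold h'. rewrite cs_gfamP.
    unfold rsemi. fold g h. rewrite <- cs_actM, gmulVg. apply cs_act1. }
  exists k; split; auto.
  destruct (coset_rep_coset_of (gmul G (ginv G k) (ginv G g))) as [k2 [Hk2 E]].
  unfold rsemi at 1. fold h'. rewrite E, gmulA, act_mul_stab by auto.
  assert (Hh' : h' = gmul G (gmul G h g) k) by (unfold k; rewrite mulKVg; auto).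
  rewrite Hh', <- (gmulA G (gmul G h g) k), mulKVg, <- gmulA, mulgV, mulg1.
  apply cs_gfamP.
Qed.

Lemma rsemi_cancel_list {N : coset CS -> Prop} :
  finite_stabiliser CS -> finite_set N ->
  exists l : list (coset CS), forall m n, N n -> exists c, In c l /\ rsemi (rsemi m n) c = m.
Proof.
  intros [lG0 HlG0] [_ [lN [_ [HlN _]]]].
  exists (flat_map (fun n => map (fun k =>
            coset_of CS (gmul G (ginv G k) (ginv G (coset_rep n)))) lG0) lN).
  intros m n Hn. destruct (rsemi_cancel m n) as [k [Hk E]].
  eexists; split; [|exact E]. apply in_flat_map; exists n; split; [apply HlN; auto|].
  apply in_map_iff; eexists; split; [reflexivity|auto].
Qed.

End CellSpace.

Section Automaton.
Context {CS : cell_space} {Q : Type} {N : coset CS -> Prop}.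
Variable delta : ({n | N n} -> Q) -> Q.
Local Notation M := (cs_M CS).
Local Notation Delta := (global_transition N delta).

Definition global_image : (M -> Q) -> Prop := fun d => exists c, d = Delta c.

Definition outer_boundary (F0 : M -> Prop) : M -> Prop :=
  fun m => ~ F0 m /\ exists n, N n /\ F0 (rsemi m n).

Lemma global_transition_local (F0 : M -> Prop) (c c' : M -> Q) :
  (forall m, ~ F0 m -> c m = c' m) ->
  restrict F0 (Delta c) = restrict F0 (Delta c') ->
  restrict (outer_boundary F0) (Delta c) = restrict (outer_boundary F0) (Delta c') ->
  Delta c = Delta c'.
Proof.
  intros Hout H1 H2. apply functional_extensionality; intro m.
  destruct (classic (F0 m)) as [Hm|Hm]; [exact (equal_f H1 (exist _ m Hm))|].
  destruct (classic (exists n, N n /\ F0 (rsemi m n))) as [Hn|Hn].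
  { exact (equal_f H2 (exist _ m (conj Hm Hn))). }
  unfold global_transition. f_equal. apply functional_extensionality; intros [n Hn']; simpl.
  apply Hout. intro C; apply Hn; eauto.
Qed.

Lemma fcard_outer_boundary_le (l : list (coset CS))
  (Hl : forall m n, N n -> exists c, In c l /\ rsemi (rsemi m n) c = m)
  {F0 : M -> Prop} : finite_set F0 ->
  finite_set (outer_boundary F0) /\
  (fcard (outer_boundary F0) <= list_sum (map (fun c => fcard (exit_set CS F0 c)) l))%nat.
Proof.
  intro HF0.
  assert (HE : forall c, finite_set (exit_set CS F0 c))
    by (intro c; apply (finite_set_incl _ HF0); intros m []; auto).
  rewrite (map_ext_in _ (fun c => length (map (fun m' => (m', c)) (fenum (exit_set CS F0 c)))))
    by (intros c _; rewrite length_map; symmetry; apply (fenum_spec (HE c))).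
  rewrite <- length_flat_map.
  apply fcard_le_rel with (Rl := fun m p => m = rsemi (fst p) (snd p)).
  - intros m [Hm [n [Hn HFn]]]. destruct (Hl m n Hn) as [c [Hc E]].
    exists (rsemi m n, c); split; [|simpl; auto].
    apply in_flat_map; exists c; split; auto.
    apply in_map_iff; exists (rsemi m n); split; [reflexivity|].
    apply (fenum_spec (HE c)). split; auto. rewrite E; auto.
  - intros x x' y _ _ -> ->; auto.
Qed.

(* The injection sends a word w on F0 to the restrictions to F0 and to its outer boundary
   of the image of the configuration reading w on F0 and q0 elsewhere. *)
Lemma pre_injective_count {lQ : list Q} (HlQ : forall a, In a lQ) (HlQnd : NoDup lQ)
  (q0 : Q) {F0 : M -> Prop} (HF0 : finite_set F0) (HD : finite_set (outer_boundary F0)) :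
  pre_injective Delta ->
  (length lQ ^ fcard F0 <=
     fcard (proj_set F0 global_image) * fcard (proj_set (outer_boundary F0) global_image))%nat.
Proof.
  intro Hpre. set (D := outer_boundary F0) in *.
  destruct (fenum_spec HF0) as [HFn [HFi HFl]].
  set (lF := fenum F0) in *.
  destruct (fcard_patterns_le lQ HlQ HF0 (proj_set F0 global_image)) as [HPF _].
  destruct (fcard_patterns_le lQ HlQ HD (proj_set D global_image)) as [HPD _].
  destruct (fenum_spec HPF) as [_ [HPFi HPFl]].
  destruct (fenum_spec HPD) as [_ [HPDi HPDl]].
  destruct (fcard_list (fun w => In w (words lQ (fcard F0))) (words_NoDup _ (fcard F0) HlQnd)
              (fun w => iff_refl _)) as [_ Hwords].
  destruct (fcard_le_rel (list_prod (fenum (proj_set F0 global_image))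
                                   (fenum (proj_set D global_image)))
    (fun w => In w (words lQ (fcard F0)))
    (fun w p => p = (restrict F0 (Delta (lookup q0 lF w)), restrict D (Delta (lookup q0 lF w)))))
    as [_ Hle].
  - intros w _. eexists; split; [|reflexivity].
    apply in_prod; [apply HPFi|apply HPDi]; eexists; (split; [eexists; reflexivity|reflexivity]).
  - intros w w' p Hw Hw' -> E. injection E as E1 E2.
    apply (words_In _ HlQ) in Hw, Hw'.
    rewrite <- (map_lookup q0 lF HFn w), <- (map_lookup q0 lF HFn w') by lia. f_equal.
    assert (Hout : forall m, ~ F0 m -> lookup q0 lF w m = lookup q0 lF w' m)
      by (intros m Hm; rewrite !lookup_notin; auto; rewrite HFi; auto).
    apply Hpre; [|apply global_transition_local with F0; auto].
    apply (finite_set_incl _ HF0). intros m Hm. apply NNPP; intro C; exact (Hm (Hout m C)).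
  - rewrite length_prod, HPFl, HPDl, Hwords, words_length in Hle. exact Hle.
Qed.

Lemma pre_injective_pattern_bound {lQ : list Q} (HlQ : forall a, In a lQ) (HlQnd : NoDup lQ)
  (q0 : Q) (l : list (coset CS))
  (Hl : forall m n, N n -> exists c, In c l /\ rsemi (rsemi m n) c = m)
  {F0 : M -> Prop} (HF0 : finite_set F0) :
  pre_injective Delta ->
  (length lQ ^ fcard F0 <= fcard (proj_set F0 global_image) *
     length lQ ^ list_sum (map (fun c => fcard (exit_set CS F0 c)) l))%nat.
Proof.
  intro Hpre. destruct (fcard_outer_boundary_le l Hl HF0) as [HD HDc].
  eapply Nat.le_trans; [exact (pre_injective_count HlQ HlQnd q0 HF0 HD Hpre)|].
  apply Nat.mul_le_mono_l.
  eapply Nat.le_trans; [apply (fcard_patterns_le lQ HlQ HD)|].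
  apply Nat.pow_le_mono_r; [|exact HDc].
  destruct lQ; [destruct (HlQ q0)|discriminate].
Qed.

End Automaton.

Lemma ln_count_ratio_ge (q a n s : nat) : (1 <= q)%nat -> (0 < n)%nat ->
  (q ^ n <= a * q ^ s)%nat ->
  ln (INR q) - ln (INR q) * (INR s / INR n) <= ln (INR a) / INR n.
Proof.
  intros Hq Hn Hc.
  assert (Ha : a <> 0%nat)
    by (intro; subst; pose proof (Nat.pow_nonzero q n); simpl in Hc; lia).
  assert (Hq' : 0 < INR q) by (apply (lt_INR 0); lia).
  assert (Ha' : 0 < INR a) by (apply (lt_INR 0); lia).
  assert (Hn' : 0 < INR n) by (apply (lt_INR 0); lia).
  apply le_INR in Hc. rewrite mult_INR, !pow_INR in Hc.
  apply ln_le in Hc; [|apply pow_lt; auto].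
  rewrite ln_mult, !ln_pow in Hc by (auto; apply pow_lt; auto).
  apply Rmult_le_reg_r with (INR n); auto.
  replace ((ln (INR q) - ln (INR q) * (INR s / INR n)) * INR n)
    with (INR n * ln (INR q) - INR s * ln (INR q)) by (field; lra).
  replace (ln (INR a) / INR n * INR n) with (ln (INR a)) by (field; lra).
  lra.
Qed.

Lemma net_tends_to_plus {I : directed_set} {x y : I -> R} {a b} :
  net_tends_to x a -> net_tends_to y b -> net_tends_to (fun i => x i + y i) (a + b).
Proof.
  intros Hx Hy eps Heps.
  destruct (Hx (eps / 2)) as [i1 H1]; [lra|]. destruct (Hy (eps / 2)) as [i2 H2]; [lra|].
  destruct (ds_directed I i1 i2) as [i0 [Hi1 Hi2]]. exists i0; intros i Hi.
  specialize (H1 i (ds_trans _ _ _ _ Hi1 Hi)); specialize (H2 i (ds_trans _ _ _ _ Hi2 Hi)).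
  replace (x i + y i - (a + b)) with ((x i - a) + (y i - b)) by ring.
  eapply Rle_lt_trans; [apply Rabs_triang|lra].
Qed.

Lemma net_tends_to_list_sum_ratio {I : directed_set} {C : Type} (l : list C)
  (f : I -> C -> nat) (d : I -> nat) :
  (forall c, In c l -> net_tends_to (fun i => INR (f i c) / INR (d i)) 0) ->
  net_tends_to (fun i => INR (list_sum (map (f i) l)) / INR (d i)) 0.
Proof.
  induction l as [|c l IH]; intro H; simpl.
  - intros eps Heps. destruct (ds_inhabited I) as [i0]. exists i0; intros i _.
    unfold Rdiv; rewrite Rmult_0_l, Rminus_0_r, Rabs_R0; exact Heps.
  - assert (Hsum := net_tends_to_plus (H c (or_introl eq_refl))
                      (IH (fun c' Hc' => H c' (or_intror Hc')))).
    rewrite Rplus_0_l in Hsum. intros eps Heps.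
    destruct (Hsum eps Heps) as [i0 Hi0]. exists i0; intros i Hi.
    rewrite plus_INR, Rdiv_plus_distr; auto.
Qed.

Lemma Rbar_le_approx (L : R) (y : Rbar) :
  (forall eps, 0 < eps -> exists r, Rbar_le (Finite r) y /\ L - eps < r) ->
  Rbar_le (Finite L) y.
Proof.
  intro H. destruct y as [z| |]; simpl; auto.
  - destruct (Rle_lt_dec L z) as [h|h]; auto.
    destruct (H (L - z)) as [r [Hr Hr']]; [lra|]. simpl in Hr. lra.
  - destruct (H 1) as [r [Hr _]]; [lra|]. destruct Hr.
Qed.

Lemma net_limsup_ge {I : directed_set} (x : I -> R) (L : R) :
  (forall eps, 0 < eps -> exists i0, forall i, ds_le I i0 i -> L - eps < x i) ->
  Rbar_le (Finite L) (net_limsup x).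
Proof.
  intro Hx. unfold net_limsup, Rbar_glb.
  destruct (Rbar_ex_glb _) as [g [Hlb Hg]]; cbn [proj1_sig]. clear Hlb.
  apply Hg. intros y [i0 ->]. apply Rbar_le_approx. intros eps Heps.
  destruct (Hx eps Heps) as [j Hj]. destruct (ds_directed I i0 j) as [k [Hk1 Hk2]].
  exists (x k); split; [apply (proj1 (Lub_Rbar_correct _)); eauto|auto].
Qed.

Lemma net_limsup_ge_vanishing {I : directed_set} (x s : I -> R) (L : R) :
  0 <= L -> net_tends_to s 0 -> (forall i, L - L * s i <= x i) ->
  Rbar_le (Finite L) (net_limsup x).
Proof.
  intros HL Hs Hx. apply net_limsup_ge. intros eps Heps.
  destruct (Hs (eps / (L + 1))) as [i0 Hi0]; [apply Rdiv_lt_0_compat; lra|].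
  exists i0; intros i Hi. specialize (Hi0 i Hi). specialize (Hx i).
  rewrite Rminus_0_r in Hi0.
  assert (E : eps / (L + 1) * (L + 1) = eps) by (field; lra).
  pose proof (Rle_abs (s i)). pose proof (Rabs_pos (s i)). nra.
Qed.

Theorem theorem5
  (CS : cell_space)
  (HG0 : finite_stabiliser CS)
  (Hamen : right_amenable CS)
  (Q : Type) (HQfin : finite_set (fun _ : Q => True)) (HQne : inhabited Q)
  (N : coset CS -> Prop) (HN : nbhd_ok N) (HNfin : finite_set N)
  (delta : ({n | N n} -> Q) -> Q)
  (I : directed_set) (F : I -> cs_M CS -> Prop)
  (HF : right_folner_net CS I F) :
  Rbar_lt
    (entropy F (fun d => exists c : cs_M CS -> Q, d = global_transition N delta c))
    (Finite (ln (INR (fcard (fun _ : Q => True))))) ->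
  ~ pre_injective (global_transition N delta).
Proof.
  intros Hlt Hpre.
  destruct (rsemi_cancel_list CS HG0 HNfin) as [l Hl].
  destruct (fenum_spec HQfin) as [HQn [HQi HQl]].
  set (lQ := fenum (fun _ : Q => True)) in *.
  assert (HlQ : forall a, In a lQ) by (intro; apply HQi; auto).
  destruct HQne as [q0].
  assert (Hq : (1 <= length lQ)%nat) by (destruct lQ; [destruct (HlQ q0)|simpl; lia]).
  destruct HF as [HFfin HFol].
  assert (Hentropy : Rbar_le (Finite (ln (INR (length lQ)))) (entropy F (global_image delta))).
  { apply net_limsup_ge_vanishing with
      (s := fun i => INR (list_sum (map (fun c => fcard (exit_set CS (F i) c)) l))
                     / INR (fcard (F i))).
    - rewrite <- ln_1. apply ln_le; [lra|apply (le_INR 1); exact Hq].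
    - apply net_tends_to_list_sum_ratio. intros c _. apply HFol.
    - intro i. destruct (HFfin i) as [Hfi [m Hm]]. apply ln_count_ratio_ge; auto.
      + exact (fcard_pos Hfi Hm).
      + exact (pre_injective_pattern_bound delta HlQ HQn q0 l Hl Hfi Hpre). }
  rewrite <- HQl in Hlt. exact (Rbar_le_not_lt _ _ Hentropy Hlt).
Qed.
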